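(* Let $\|\cdot\|$ be a norm on $\mathbb{R}^d$ and $T:\mathbb{R}^d\to\mathbb{R}^d$ a $\gamma$-contraction, $\gamma\in(0,1)$, with unique fixed point $x^*$. Let $N\in\mathbb{N}$ be fixed, $x^0\in\mathbb{R}^d$, and $(x^n)$ generated by $x^n=(1-\beta_n)x^0+\beta_n(Tx^{n-1}+U_n)$ with $\beta_n=\frac{n}{n+1}$, where the random vectors $U_n$ satisfy, for some constant $\sigma>0$, $$\sigma_n^2\le\frac{\sigma^2}{n^2\gamma^{N-n}},\qquad \sigma_n:=\mathbb{E}(\|U_n\|),\quad n=1,\dots,N.$$ Then $\mathbb{E}(\|x^N-x^*\|)\le\dfrac{\|x^0-x^*\|+2\sigma}{(1-\gamma)(N+1)}$. *)

From HB Require Import structures.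
From mathcomp Require Import all_boot all_order all_algebra.
From mathcomp Require Import all_classical all_reals all_analysis.
Set Implicit Arguments. Unset Strict Implicit. Unset Printing Implicit Defensive.
Import Order.TTheory GRing.Theory Num.Theory.
Local Open Scope ring_scope.

Definition is_vnorm (R : realType) (d : nat) (nu : 'rV[R]_d -> R) : Prop :=
  [/\ forall x, 0 <= nu x,
      forall x, nu x = 0 -> x = 0,
      forall (a : R) x, nu (a *: x) = `|a| * nu x
    & forall x y, nu (x + y) <= nu x + nu y].

Definition is_gcontraction (R : realType) (d : nat) (nu : 'rV[R]_d -> R)
  (gamma : R) (T : 'rV[R]_d -> 'rV[R]_d) : Prop :=
  forall x y, nu (T x - T y) <= gamma * nu (x - y).

Definition beta (R : realType) (n : nat) : R := n%:R / n.+1%:R.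

Fixpoint halpern (R : realType) (d : nat) (T : 'rV[R]_d -> 'rV[R]_d)
  (U : nat -> 'rV[R]_d) (x0 : 'rV[R]_d) (n : nat) : 'rV[R]_d :=
  match n with
  | 0 => x0
  | m.+1 => (1 - beta R m.+1) *: x0 + beta R m.+1 *: (T (halpern T U x0 m) + U m.+1)
  end.

(* With e_n := (n + 1) nu (x^n - xstar), the choice beta_n = n / (n + 1) turns the
   recursion into the linear inequality
     e_(n+1) <= nu (x^0 - xstar) + gamma e_n + (n + 1) nu (U_(n+1)),
   so e_N <= nu (x^0 - xstar) sum_k gamma^k + sum_m gamma^(N-m) m nu (U_m).
   In expectation the noise hypothesis bounds the m-th term by sigma sqrt(gamma)^(N-m),
   and the two geometric sums are at most 1 / (1 - gamma) and
   1 / (1 - sqrt gamma) <= 2 / (1 - gamma).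
   Measurability of w |-> nu (U_n w) holds because a norm on R^d is 1-Lipschitz for a
   weighted l^1 distance, hence a supremum of countably many measurable functions
   indexed by rational points. *)

From HB Require Import structures.
From mathcomp Require Import all_boot all_order all_algebra.
From mathcomp Require Import all_classical all_reals all_analysis.
From mathcomp Require Import measurable_realfun ring lra.
Import Order.TTheory GRing.Theory Num.Theory.
Local Open Scope classical_set_scope.
Local Open Scope ring_scope.

Section vnorm.
Variables (R : realType) (d : nat) (nu : 'rV[R]_d -> R).
Hypothesis nu_norm : is_vnorm nu.

Lemma vnorm0 : nu 0 = 0.
Proof. by have [_ _ nuZ _] := nu_norm; rewrite -(scale0r 0) nuZ normr0 mul0r. Qed.

Lemma vnorm_sum (I : Type) (s : seq I) (F : I -> 'rV[R]_d) :
  nu (\sum_(i <- s) F i) <= \sum_(i <- s) nu (F i).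
Proof.
have [_ _ _ nuD] := nu_norm.
elim: s => [|a s IHs]; first by rewrite !big_nil vnorm0.
by rewrite !big_cons; apply: le_trans (nuD _ _) _; rewrite lerD2l.
Qed.

Let wdist (x y : 'rV[R]_d) : R := \sum_i `|x 0 i - y 0 i| * nu (delta_mx 0 i).

Lemma vnorm_le_wdist x y : nu x <= nu y + wdist x y.
Proof.
have [_ _ nuZ nuD] := nu_norm.
rewrite {1}(_ : x = y + (x - y)); last by rewrite addrC subrK.
apply: le_trans (nuD _ _) _; rewrite lerD2l.
rewrite {1}(row_sum_delta (x - y)); apply: le_trans; first exact: vnorm_sum.
by apply: ler_sum => i _; rewrite nuZ !mxE.
Qed.

Lemma wdistC x y : wdist x y = wdist y x.
Proof. by apply: eq_bigr => i _; rewrite distrC. Qed.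

Lemma wdist_rat_approx x (e : R) : 0 < e ->
  exists q : {ffun 'I_d -> rat}, wdist x (\row_i ratr (q i)) < e.
Proof.
move=> e_gt0; have [nu_ge0 _ _ _] := nu_norm.
pose C := \sum_i nu (delta_mx 0 i : 'rV[R]_d).
have C_ge0 : 0 <= C by apply: sumr_ge0.
pose eta := e / (1 + C).
have eta_gt0 : 0 < eta by rewrite divr_gt0 // ltr_pwDl.
have /fin_all_exists[q qP] (i : 'I_d) :
    exists r : rat, ratr r \in `]x 0 i - eta, x 0 i + eta[.
  by apply: rat_in_itvoo; rewrite ltrBlDr -addrA ltrDl addr_gt0.
exists [ffun i => q i]; apply: (@le_lt_trans _ _ (eta * C)).
  rewrite mulr_sumr; apply: ler_sum => i _; rewrite !mxE ffunE ler_wpM2r //.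
  by move: (qP i); rewrite in_itv /= ler_norml => /andP[? ?]; apply/andP; split; lra.
rewrite /eta mulrAC ltr_pdivrMr ?ltr_pwDl //; lra.
Qed.

Lemma measurable_vnorm dO (Omega : measurableType dO) (V : Omega -> 'rV[R]_d) :
  (forall i, measurable_fun setT (fun w => V w ord0 i)) ->
  measurable_fun setT (fun w => nu (V w)).
Proof.
move=> mV; apply: (measurability _ (RGenOInfty.measurableE R)) => //.
move=> /= _ [_ [a ->] <-]; rewrite preimage_itvoy setTI.
pose qv (q : {ffun 'I_d -> rat}) : 'rV[R]_d := \row_i ratr (q i).
suff -> : [set w | a < nu (V w)] =
    \bigcup_q [set w | a < nu (qv q) - wdist (V w) (qv q)].
  apply: countable_bigcupT_measurable => [|q]; first exact: countableP.
  have mq : measurable_fun setT (fun w => nu (qv q) - wdist (V w) (qv q)).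
    apply: measurable_funB; first exact: measurable_cst.
    apply: measurable_sum => i; apply: measurable_funM => //.
    apply: measurableT_comp => //; apply: measurable_funB => //.
  by rewrite -[X in measurable X]setTI -preimage_itvoy; exact: mq.
apply/seteqP; split => w /=.
  move=> aw; have /(wdist_rat_approx (V w))[q qw] : 0 < (nu (V w) - a) / 2.
    by rewrite divr_gt0 // subr_gt0.
  by exists q => //=; have := vnorm_le_wdist (V w) (qv q); lra.
by move=> [q _ /=]; have := vnorm_le_wdist (qv q) (V w); rewrite wdistC; lra.
Qed.

End vnorm.

Lemma mulr_beta {R : realType} n : n.+1%:R * beta R n = n%:R.
Proof. by rewrite /beta mulrC divfK ?pnatr_eq0. Qed.

Lemma mulr_onem_beta {R : realType} n : n.+1%:R * (1 - beta R n) = 1.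
Proof. by rewrite mulrBr mulr1 mulr_beta -natrB // subSnn. Qed.

Section halpern_deterministic.
Variables (R : realType) (d : nat) (nu : 'rV[R]_d -> R) (gamma : R).
Variables (T : 'rV[R]_d -> 'rV[R]_d) (xstar x0 : 'rV[R]_d) (V : nat -> 'rV[R]_d).
Hypotheses (nu_norm : is_vnorm nu) (gamma_ge0 : 0 <= gamma).
Hypotheses (T_contr : is_gcontraction nu gamma T) (T_xstar : T xstar = xstar).

Let x := halpern T V x0.

Lemma halpern_step n :
  n.+2%:R * nu (x n.+1 - xstar) <=
  nu (x0 - xstar) + gamma * (n.+1%:R * nu (x n - xstar)) + n.+1%:R * nu (V n.+1).
Proof.
have [nu_ge0 _ nuZ nuD] := nu_norm.
set b := beta R n.+1.
have b_ge0 : 0 <= b by rewrite divr_ge0.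
have onem_b_ge0 : 0 <= 1 - b.
  by rewrite -(@ler_pM2l _ n.+2%:R) ?ltr0n // mulr_onem_beta mulr0.
have -> : x n.+1 - xstar =
    (1 - b) *: (x0 - xstar) + b *: ((T (x n) - T xstar) + V n.+1).
  by rewrite T_xstar /x /=; apply/rowP => j; rewrite !mxE -/b; ring.
have contr_noise_le :
    nu ((T (x n) - T xstar) + V n.+1) <= gamma * nu (x n - xstar) + nu (V n.+1).
  by apply: le_trans (nuD _ _) _; rewrite lerD2r T_contr.
apply: le_trans (ler_wpM2l (ler0n _ _) (nuD _ _)) _.
rewrite !nuZ (ger0_norm b_ge0) (ger0_norm onem_b_ge0) mulrDr.
rewrite (mulrA _ (1 - b)) (mulrA _ b) /b mulr_onem_beta mulr_beta mul1r.
by rewrite -[X in _ <= X]addrA lerD2l mulrCA -mulrDr ler_wpM2l.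
Qed.

Lemma halpern_bound n :
  n.+1%:R * nu (x n - xstar) <=
  nu (x0 - xstar) * \sum_(k < n.+1) gamma ^+ k +
  \sum_(m < n.+1) gamma ^+ (n - m) * m%:R * nu (V m).
Proof.
elim: n => [|n IHn].
  by rewrite !big_ord1 mulr0 mul0r addr0 expr0 mulr1 mul1r.
apply: le_trans (halpern_step n) _.
rewrite [X in _ <= _ * X + _]big_ord_recl [X in _ <= _ + X]big_ord_recr.
under eq_bigr do rewrite lift0 exprS.
rewrite /= subnn !expr0 mul1r.
under [X in _ <= _ + (X + _)]eq_bigr => m _ do
  rewrite (subSn (ltnSE (ltn_ord m))) exprS -!mulrA.
rewrite -!mulr_sumr.
under [X in _ <= _ + (_ * X + _)]eq_bigr do rewrite mulrA.
have := ler_wpM2l gamma_ge0 IHn; lra.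
Qed.

End halpern_deterministic.

Section integral.
Local Open Scope ereal_scope.
Context dO (Omega : measurableType dO) (R : realType).

(* No measurability is needed: the integral of a nonnegative function is the
   supremum of the integrals of the simple functions below it. *)
Lemma ge0_le_integralT (mu : {measure set Omega -> \bar R}) (f g : Omega -> \bar R) :
  (forall w, 0 <= f w) -> (forall w, f w <= g w) ->
  \int[mu]_w f w <= \int[mu]_w g w.
Proof.
move=> f_ge0 fg; have g_ge0 w : 0 <= g w := le_trans (f_ge0 w) (fg w).
rewrite !ge0_integralTE //; apply: ge_ereal_sup => _ [h hf <-].
by apply: ereal_sup_ubound; exists h => // w; exact: le_trans (hf w) (fg w).
Qed.

Lemma ge0_integral_cst_sum (P : probability Omega R) (I : Type) (s : seq I)
    (c : R) (a : I -> R) (f : I -> Omega -> R) :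
  (0 <= c)%R -> (forall i, 0 <= a i)%R -> (forall i w, 0 <= f i w)%R ->
  (forall i, measurable_fun setT (f i)) ->
  \int[P]_w (c%:E + \sum_(i <- s) (a i)%:E * (f i w)%:E) =
  c%:E + \sum_(i <- s) (a i)%:E * \int[P]_w (f i w)%:E.
Proof.
move=> c_ge0 a_ge0 f_ge0 mf.
have af_ge0 i w : 0 <= (a i)%:E * (f i w)%:E by rewrite -EFinM lee_fin mulr_ge0.
have maf i : measurable_fun setT (fun w => (a i)%:E * (f i w)%:E).
  by apply: measurable_funeM; exact/measurable_EFinP.
rewrite ge0_integralD //; last 2 first.
- by move=> w _; rewrite sume_ge0.
- exact: emeasurable_sum.
rewrite integral_cst // [X in _ * X]probability_setT mule1 ge0_integral_sum //.
congr (_ + _); apply: eq_bigr => i _; rewrite ge0_integralZl //.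
- exact/measurable_EFinP.
- by move=> w _; rewrite lee_fin.
- by rewrite lee_fin.
Qed.

End integral.

Lemma onem_mul_geom_le1 {R : realDomainType} (g : R) n :
  0 <= g -> (1 - g) * \sum_(k < n) g ^+ k <= 1.
Proof.
move=> g_ge0; rewrite -[1 - g]opprB mulNr -subrX1 opprB.
by rewrite lerBlDr lerDl exprn_ge0.
Qed.

Lemma onem_sqr_mul_geom_le2 {R : realDomainType} (t : R) n :
  0 <= t -> (1 - t ^+ 2) * \sum_(k < n) t ^+ k <= 2.
Proof.
move=> t_ge0; have -> : 1 - t ^+ 2 = (1 + t) * (1 - t) by ring.
rewrite -mulrA -[1 - t]opprB mulNr -subrX1 opprB.
have [t_le1 | t_gt1] := leP t 1.
- by have := exprn_ile1 n t_ge0 t_le1; have := exprn_ge0 n t_ge0; nra.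
- by have := exprn_ege1 n (ltW t_gt1); nra.
Qed.

Lemma mul_expr_le_of_sqr {R : realFieldType} (t s r M : R) k :
  0 < t -> 0 < M -> 0 <= r -> 0 <= s ->
  r * r <= s ^+ 2 / (M ^+ 2 * (t ^+ 2) ^+ k) -> (t ^+ 2) ^+ k * M * r <= s * t ^+ k.
Proof.
move=> t_gt0 M_gt0 r_ge0 s_ge0.
have tk_gt0 : 0 < t ^+ k := exprn_gt0 k t_gt0.
rewrite -exprM mulnC exprM -exprMn ler_pdivlMr ?exprn_gt0 ?mulr_gt0 // => rMt.
have X_le_s : r * (M * t ^+ k) <= s.
  have : 0 <= r * (M * t ^+ k) by rewrite mulr_ge0 // mulr_ge0 // ltW.
  move: rMt; rewrite (_ : r * r * _ = (r * (M * t ^+ k)) ^+ 2); last by ring.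
  set X := r * _ => ? ?; nra.
by have := ler_wpM2l (ltW tk_gt0) X_le_s; lra.
Qed.

Lemma expected_noise_term_le {R : realType} (gamma sigma : R) (I : \bar R) (m N : nat) :
  0 < gamma -> 0 <= sigma -> (0 <= I)%E ->
  ((0 < m)%N -> (I * I <= (sigma ^+ 2 / (m%:R ^+ 2 * gamma ^+ (N - m)))%:E)%E) ->
  ((gamma ^+ (N - m) * m%:R / N.+1%:R)%:E * I <=
   (sigma * Num.sqrt gamma ^+ (N - m) / N.+1%:R)%:E)%E.
Proof.
move=> g_gt0 s_ge0 I_ge0 I_sqr.
have [-> | m_gt0] := posnP m.
  by rewrite mulr0 mul0r mul0e lee_fin !mulr_ge0 ?exprn_ge0 ?sqrtr_ge0.
move: I_ge0 (I_sqr m_gt0) => {I_sqr}; case: I => [r | |] //=; rewrite !lee_fin => r_ge0.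
move=> r_sqr; rewrite mulrAC ler_pM2r ?invr_gt0 ?ltr0n //.
have := @mul_expr_le_of_sqr _ (Num.sqrt gamma) sigma r m%:R (N - m).
rewrite sqr_sqrtr; last exact: ltW.
by apply; rewrite ?sqrtr_gt0 ?ltr0n.
Qed.

Lemma halpern_rate_le {R : realType} (g D s : R) N :
  0 < g < 1 -> 0 <= D -> 0 <= s ->
  D * (\sum_(k < N.+1) g ^+ k) / N.+1%:R +
  \sum_(m < N.+1) s * Num.sqrt g ^+ (N - m) / N.+1%:R <=
  (D + 2 * s) / ((1 - g) * N.+1%:R).
Proof.
move=> /andP[g_gt0 g_lt1] D_ge0 s_ge0.
have sum_rev : \sum_(m < N.+1) Num.sqrt g ^+ (N - m) = \sum_(m < N.+1) Num.sqrt g ^+ m.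
  rewrite -(big_mkord xpredT (fun m => Num.sqrt g ^+ m)) big_rev_mkord subn0.
  by apply: eq_bigr => m _; rewrite subSS.
have geom_g := onem_mul_geom_le1 g N.+1 (ltW g_gt0).
have geom_sqrt := onem_sqr_mul_geom_le2 (Num.sqrt g) N.+1 (sqrtr_ge0 g).
rewrite sqr_sqrtr in geom_sqrt; last exact: ltW.
rewrite -mulr_suml -mulr_sumr sum_rev -mulrDl invfM mulrA ler_pM2r ?invr_gt0 ?ltr0n //.
rewrite ler_pdivlMr ?subr_gt0 //.
have := ler_wpM2l D_ge0 geom_g; have := ler_wpM2l s_ge0 geom_sqrt; nra.
Qed.

Lemma integral_halpern_le {R : realType} (d : nat) (nu : 'rV[R]_d -> R)
    (gamma : R) (T : 'rV[R]_d -> 'rV[R]_d) (xstar x0 : 'rV[R]_d)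
    (dO : measure_display) (Omega : measurableType dO) (P : probability Omega R)
    (U : nat -> Omega -> 'rV[R]_d) (n : nat) :
  is_vnorm nu -> 0 <= gamma -> is_gcontraction nu gamma T -> T xstar = xstar ->
  (forall m (i : 'I_d), measurable_fun setT (fun w => U m w ord0 i)) ->
  (\int[P]_w (nu (halpern T (fun m => U m w) x0 n - xstar))%:E <=
   (nu (x0 - xstar) * (\sum_(k < n.+1) gamma ^+ k) / n.+1%:R)%:E +
   \sum_(m < n.+1) (gamma ^+ (n - m) * m%:R / n.+1%:R)%:E * \int[P]_w (nu (U m w))%:E)%E.
Proof.
move=> nu_norm gamma_ge0 T_contr T_xstar mU; have [nu_ge0 _ _ _] := nu_norm.
have geom_ge0 : 0 <= \sum_(k < n.+1) gamma ^+ k by rewrite sumr_ge0 // => k; rewrite exprn_ge0.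
rewrite -ge0_integral_cst_sum ?divr_ge0 ?mulr_ge0 ?exprn_ge0 //; last 2 first.
- by move=> m; rewrite !divr_ge0 ?mulr_ge0 ?exprn_ge0.
- by move=> m; apply: measurable_vnorm.
apply: ge0_le_integralT => w; first by rewrite lee_fin.
under [X in (_ <= _ + X)%E]eq_bigr do rewrite -EFinM mulrAC.
rewrite sumEFin -EFinD lee_fin -mulr_suml -mulrDl ler_pdivlMr ?ltr0n // mulrC.
exact: halpern_bound.
Qed.

Theorem theorem4 (R : realType) (d : nat) (nu : 'rV[R]_d -> R)
  (gamma : R) (T : 'rV[R]_d -> 'rV[R]_d) (xstar x0 : 'rV[R]_d)
  (dO : measure_display) (Omega : measurableType dO)
  (P : probability Omega R)
  (U : nat -> Omega -> 'rV[R]_d) (sigma : R) (N : nat) :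
  is_vnorm nu ->
  0 < gamma < 1 ->
  is_gcontraction nu gamma T ->
  T xstar = xstar ->
  (forall n (i : 'I_d), measurable_fun setT (fun w => U n w ord0 i)) ->
  0 < sigma ->
  (forall n : nat, (1 <= n <= N)%N ->
     ((\int[P]_w (nu (U n w))%:E) * (\int[P]_w (nu (U n w))%:E) <=
      (sigma ^+ 2 / (n%:R ^+ 2 * gamma ^+ (N - n)))%:E)%E) ->
  (\int[P]_w (nu (halpern T (fun n => U n w) x0 N - xstar))%:E <=
   ((nu (x0 - xstar) + 2 * sigma) / ((1 - gamma) * N.+1%:R))%:E)%E.
Proof.
move=> nu_norm /andP[g_gt0 g_lt1] T_contr T_xstar mU s_gt0 noise.
have [nu_ge0 _ _ _] := nu_norm.
apply: le_trans; first exact: integral_halpern_le (ltW g_gt0) T_contr T_xstar mU.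
apply: le_trans.
  apply: leeD2l; apply: lee_sum => m _.
  apply: (@expected_noise_term_le _ gamma sigma) => //.
  - exact: ltW.
  - by apply: integral_ge0 => w _; rewrite lee_fin.
  - by move=> m_gt0; apply: noise; rewrite m_gt0 -ltnS ltn_ord.
by rewrite sumEFin -EFinD lee_fin halpern_rate_le ?g_gt0 ?g_lt1 // ltW.
Qed.
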